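(* Let $V$ be a smooth field on $\mathbb{R}^2$ with values in symmetric $2\times2$ real matrices such that $I+V$ is positive definite, and let $F=(I+V)R$ with $R$ orthogonal (polar decomposition) satisfy $\det F=1$. Assume moreover that there is a smooth scalar function $\theta$ on $\mathbb{R}^2$ with $\nabla\cdot V = A(I+V)\nabla\theta$. Then \[ \mathrm{tr}\,V = -\det V \] and \[ \nabla\cdot\nabla\cdot V = -\nabla\cdot\big[AV(I+V)^{-1}A\,\nabla\cdot V\big], \] where $A=\begin{pmatrix}0&-1\\1&0\end{pmatrix}$.
   Context: For a matrix field $M$, $(\nabla\cdot M)_i=\sum_j\partial_j M_{ij}$, and $\nabla\cdot\nabla\cdot V=\sum_{i,j}\partial_i\partial_j V_{ij}$; for a vector field $w$, $\nabla\cdot w=\sum_i\partial_i w_i$. In the paper's setting, the relation $\nabla\cdot V=A(I+V)\nabla\theta$ (with $\theta$ the rotation angle of $R$) follows from $\nabla\cdot F^T=0$ and is preserved by the viscoelastic flow. *)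

From HB Require Import structures.
From mathcomp Require Import all_boot all_order all_algebra.
From mathcomp Require Import all_classical all_reals all_analysis.
Set Implicit Arguments. Unset Strict Implicit. Unset Printing Implicit Defensive.
Import Order.TTheory GRing.Theory Num.Theory.
Import numFieldNormedType.Exports.
Local Open Scope ring_scope.

Section Defs.
Variable R : realType.

Definition pd (i : 'I_2) (f : R -> R -> R) : R -> R -> R :=
  fun x y => if i == ord0 then derive1 (fun t => f t y) x else derive1 (fun t => f x t) y.

Definition pds (l : seq 'I_2) (f : R -> R -> R) : R -> R -> R := foldr pd f l.

Definition smooth (f : R -> R -> R) : Prop :=
  forall l : seq 'I_2,
    (forall x y, derivable (fun t => pds l f t y) x 1 /\
                 derivable (fun t => pds l f x t) y 1) /\
    continuous (fun p : R * R => pds l f p.1 p.2).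

Definition smooth_mx (V : R -> R -> 'M[R]_2) : Prop :=
  forall i j, smooth (fun x y => V x y i j).

Definition divM (V : R -> R -> 'M[R]_2) : R -> R -> 'cV[R]_2 :=
  fun x y => \col_i \sum_j pd j (fun a b => V a b i j) x y.

Definition divv (w : R -> R -> 'cV[R]_2) : R -> R -> R :=
  fun x y => \sum_i pd i (fun a b => w a b i ord0) x y.

Definition divdiv (V : R -> R -> 'M[R]_2) : R -> R -> R :=
  fun x y => \sum_i \sum_j pd i (pd j (fun a b => V a b i j)) x y.

Definition grad (th : R -> R -> R) : R -> R -> 'cV[R]_2 :=
  fun x y => \col_i pd i th x y.

(* A = [[0, -1], [1, 0]] : A i j = i - j *)
Definition Amat : 'M[R]_2 := \matrix_(i < 2, j < 2) ((i : nat)%:R - (j : nat)%:R).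

Definition posdef (M : 'M[R]_2) : Prop :=
  forall v : 'cV[R]_2, v != 0 -> 0 < (v^T *m M *m v) ord0 ord0.

End Defs.

From HB Require Import structures.
From mathcomp Require Import all_boot all_order all_algebra.
From mathcomp Require Import all_classical all_reals all_analysis.
From mathcomp Require Import ring lra.
Import Order.TTheory GRing.Theory Num.Theory.
Import numFieldNormedType.Exports.
Local Open Scope ring_scope.

(* The determinant of F = (I + V) Q is det (I + V) det Q with det Q = +-1, and
   det (I + V) > 0, so det (I + V) = 1; for 2x2 matrices this reads
   1 + tr V + det V = 1.  For the divergence identity, substituting
   div V = A (I + V) grad th and A^2 = -I collapses
   A V (I + V)^-1 A div V to A grad th - div V, and div (A grad th) vanishes
   because mixed partials commute (Schwarz); hence the right-hand side is
   div div V. *)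

Lemma sum_ord2 (V : nmodType) (G : 'I_2 -> V) : \sum_(i < 2) G i = G ord0 + G ord_max.
Proof. by rewrite !big_ord_recl big_ord0 addr0; congr (_ + G _); apply/val_inj. Qed.

Lemma ord2_ind (P : 'I_2 -> Prop) : P ord0 -> P ord_max -> forall i, P i.
Proof.
move=> P0 P1 [[|[|//]] Hi].
  by rewrite (_ : Ordinal Hi = ord0) //; apply/val_inj.
by rewrite (_ : Ordinal Hi = ord_max) //; apply/val_inj.
Qed.

Section Mx2.
Context {R : comPzRingType}.
Implicit Types M : 'M[R]_2.

Lemma det_mx2 M : \det M = M ord0 ord0 * M ord_max ord_max - M ord0 ord_max * M ord_max ord0.
Proof.
rewrite (expand_det_row _ ord0) sum_ord2 /cofactor !det_mx11 !mxE /=.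
rewrite (_ : lift ord0 ord0 = ord_max); last exact/val_inj.
rewrite (_ : lift ord_max ord0 = ord0); last exact/val_inj.
rewrite expr0 expr1; ring.
Qed.

Lemma tr_mx2 M : \tr M = M ord0 ord0 + M ord_max ord_max.
Proof. by rewrite /mxtrace sum_ord2. Qed.

Lemma det_add1_mx2 M : \det (1%:M + M) = 1 + \tr M + \det M.
Proof. rewrite !det_mx2 tr_mx2 !mxE /=; ring. Qed.

End Mx2.

Lemma posdef_det_gt0 (R : realType) (M : 'M[R]_2) : posdef M -> 0 < \det M.
Proof.
pose v (p q : R) : 'cV[R]_2 := \col_i (if i == ord0 then p else q).
have qformE p q : ((v p q)^T *m M *m v p q) ord0 ord0 =
    M ord0 ord0 * p * p + (M ord0 ord_max + M ord_max ord0) * p * q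
    + M ord_max ord_max * q * q.
  by rewrite !mxE sum_ord2 !mxE !sum_ord2 !mxE /=; ring.
have v_neq0 p q : (p != 0) || (q != 0) -> v p q != 0.
  apply: contraTneq; move=> /matrixP v0.
  by have := v0 ord0 ord0; have := v0 ord_max ord0; rewrite /v !mxE /= => -> ->; rewrite eqxx.
move=> posM.
have a_gt0 : 0 < M ord0 ord0.
  by have := posM _ (v_neq0 1 0 _); rewrite oner_neq0 qformE => /(_ isT); lra.
(* With M = [[a, b], [c, d]] and s = b + c, the form at (-s, 2a) is a (4ad - s^2),
   while 4 det M = 4ad - s^2 + (b - c)^2. *)
set s := M ord0 ord_max + M ord_max ord0.
have a2_neq0 : 2 * M ord0 ord0 != 0 by rewrite mulf_neq0 ?pnatr_eq0 ?lt0r_neq0.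
have := posM _ (v_neq0 (- s) (2 * M ord0 ord0) _).
rewrite a2_neq0 orbT qformE det_mx2 => /(_ isT) pos.
have : 0 < M ord0 ord0 * (4 * M ord0 ord0 * M ord_max ord_max - s ^+ 2).
  by move: pos; congr (0 < _); rewrite /s; ring.
rewrite pmulr_rgt0 // /s => disc_gt0.
have := sqr_ge0 (M ord0 ord_max - M ord_max ord0); nra.
Qed.

Lemma det_posdef_polar_eq1 (R : realType) (W Q : 'M[R]_2) :
  posdef W -> Q *m Q^T = 1%:M -> \det (W *m Q) = 1 -> \det W = 1.
Proof.
move=> /posdef_det_gt0 detW_gt0 QQ; rewrite det_mulmx => detWQ.
have detQ2 : \det Q * \det Q = 1 by rewrite -{2}det_tr -det_mulmx QQ det1.
nra.
Qed.

Lemma skew_resolvent_mulmx (R : comUnitRingType) n (A V : 'M[R]_n) (g : 'cV[R]_n) :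
  A *m A = - 1%:M -> 1%:M + V \in unitmx ->
  A *m V *m invmx (1%:M + V) *m A *m (A *m (1%:M + V) *m g)
    = A *m g - A *m (1%:M + V) *m g.
Proof.
move=> AA W_unit.
rewrite -!mulmxA [A *m (A *m _)]mulmxA AA mulNmx mul1mx.
rewrite !mulmxN [invmx _ *m (_ *m _)]mulmxA mulVmx // mul1mx.
by rewrite mulmxDl mul1mx mulmxDr opprD addrA subrr add0r.
Qed.

Definition pderivable {R : realType} (f : R -> R -> R) x y :=
  derivable (fun t => f t y) x 1 /\ derivable (fun t => f x t) y 1.

Section PartialDerivatives.
Variable R : realType.
Implicit Types (f g : R -> R -> R) (i : 'I_2) (x y : R).

Lemma eq_pd i {f g} : (forall a b, f a b = g a b) -> pd i f = pd i g.
Proof. by move=> fg; congr pd; apply/funext => a; apply/funext => b. Qed.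

Lemma pdD i f g x y : pderivable f x y -> pderivable g x y ->
  pd i (fun a b => f a b + g a b) x y = pd i f x y + pd i g x y.
Proof.
move=> [fx fy] [gx gy]; rewrite /pd; case: ifP => _; rewrite !derive1E.
  exact: deriveD fx gx.
exact: deriveD fy gy.
Qed.

Lemma pdB i f g x y : pderivable f x y -> pderivable g x y ->
  pd i (fun a b => f a b - g a b) x y = pd i f x y - pd i g x y.
Proof.
move=> [fx fy] [gx gy]; rewrite /pd; case: ifP => _; rewrite !derive1E.
  exact: deriveB fx gx.
exact: deriveB fy gy.
Qed.

Lemma pdN i f x y : pderivable f x y ->
  pd i (fun a b => - f a b) x y = - pd i f x y.
Proof.
move=> [fx fy]; rewrite /pd; case: ifP => _; rewrite !derive1E.
  exact: deriveN fx.
exact: deriveN fy.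
Qed.

Lemma pderivableD f g x y : pderivable f x y -> pderivable g x y ->
  pderivable (fun a b => f a b + g a b) x y.
Proof. by move=> [fx fy] [gx gy]; split; [exact: derivableD fx gx | exact: derivableD fy gy]. Qed.

Lemma pderivableN f x y : pderivable f x y -> pderivable (fun a b => - f a b) x y.
Proof. by move=> [fx fy]; split; [exact: derivableN fx | exact: derivableN fy]. Qed.

End PartialDerivatives.

Lemma derive1_MVT (R : realType) (u : R -> R) a b :
  a < b -> (forall t, derivable u t 1) ->
  exists2 c, c \in `]a, b[%R & u b - u a = derive1 u c * (b - a).
Proof.
move=> ab du; apply: MVT => //.
  by move=> t _; rewrite derive1E; apply: derivableP.
by apply: derivable_within_continuous => t _; exact: du.
Qed.

Lemma second_difference_MVT (R : realType) (f : R -> R -> R) :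
  (forall a b, derivable (fun t => f t b) a 1) ->
  (forall a b, derivable (fun t => pd ord0 f a t) b 1) ->
  forall x y h k, 0 < h -> 0 < k ->
  exists xi eta, [/\ x < xi < x + h, y < eta < y + k &
    f (x + h) (y + k) - f (x + h) y - f x (y + k) + f x y
      = h * k * pd ord_max (pd ord0 f) xi eta].
Proof.
move=> fx f0y x y h k h_gt0 k_gt0.
have [xi xiI Hxi] := @derive1_MVT R (fun s => f s (y + k) - f s y) x (x + h)
  ltac:(by rewrite ltrDl) (fun t => derivableB (fx _ _) (fx _ _)).
have [eta etaI Heta] := @derive1_MVT R (fun t => pd ord0 f xi t) y (y + k)
  ltac:(by rewrite ltrDl) (f0y xi).
exists xi, eta; split; [by move: xiI; rewrite in_itv | by move: etaI; rewrite in_itv |].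
have -> : f (x + h) (y + k) - f (x + h) y - f x (y + k) + f x y =
  (f (x + h) (y + k) - f (x + h) y) - (f x (y + k) - f x y) by ring.
rewrite Hxi derive1E (deriveB (fx _ _) (fx _ _)) -!derive1E.
by move: Heta; rewrite /pd /= => ->; ring.
Qed.

Lemma nbhs_pair_ball (R : realType) (P : R * R -> Prop) x y :
  (\forall t \near (x, y), P t) ->
  exists2 d, 0 < d & forall a b, `|x - a| < d -> `|y - b| < d -> P (a, b).
Proof.
move=> /nbhs_ballP [d d_gt0 Pd]; exists d => // a b xa yb.
by apply: Pd; split; rewrite /= ?ball_normE.
Qed.

Lemma pd_transpose (R : realType) (f : R -> R -> R) x y :
  pd ord_max (pd ord0 (fun a b => f b a)) y x = pd ord0 (pd ord_max f) x y.
Proof. by rewrite /pd /=. Qed.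

Section Schwarz.
Variables (R : realType) (f : R -> R -> R).
Hypothesis fx : forall a b, derivable (fun t => f t b) a 1.
Hypothesis fy : forall a b, derivable (fun t => f a t) b 1.
Hypothesis f0y : forall a b, derivable (fun t => pd ord0 f a t) b 1.
Hypothesis f1x : forall a b, derivable (fun t => pd ord_max f t b) a 1.

(* Both mixed partials are mean values of the same second difference. *)
Lemma mixed_partials_meet x y h : 0 < h ->
  exists xi eta xi' eta', [/\ x < xi < x + h, y < eta < y + h,
    x < xi' < x + h, y < eta' < y + h &
    pd ord0 (pd ord_max f) xi' eta' = pd ord_max (pd ord0 f) xi eta].
Proof.
move=> h_gt0.
have [xi [eta [xiI etaI E]]] := @second_difference_MVT R f fx f0y x y h h h_gt0 h_gt0.
have [eta' [xi' [etaI' xiI' E']]] :=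
  @second_difference_MVT R (fun a b => f b a) (fun a b => fy b a)
    (fun a b => f1x b a) y x h h h_gt0 h_gt0.
rewrite pd_transpose in E'.
exists xi, eta, xi', eta'; split; [done | done | done | done |].
have hh_neq0 : h * h != 0 by rewrite mulf_neq0 ?lt0r_neq0.
by apply: (mulfI hh_neq0); rewrite -[in RHS]E -[in LHS]E'; ring.
Qed.

Variables x y : R.
Hypothesis f01_cont :
  {for (x, y), continuous (fun p : R * R => pd ord0 (pd ord_max f) p.1 p.2)}.
Hypothesis f10_cont :
  {for (x, y), continuous (fun p : R * R => pd ord_max (pd ord0 f) p.1 p.2)}.

Lemma pd_swap : pd ord0 (pd ord_max f) x y = pd ord_max (pd ord0 f) x y.
Proof.
apply/eqP; rewrite -subr_eq0 -normr_le0; apply/ler_addgt0Pr => e e_gt0.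
have e2_gt0 : 0 < e / 2 by rewrite divr_gt0.
have := f01_cont; move=> /cvgrPdist_lt /(_ _ e2_gt0) /nbhs_pair_ball.
move=> [d1 d1_gt0 close01].
have := f10_cont; move=> /cvgrPdist_lt /(_ _ e2_gt0) /nbhs_pair_ball.
move=> [d2 d2_gt0 close10].
pose h := Num.min d1 d2.
have h_gt0 : 0 < h by rewrite lt_min d1_gt0 d2_gt0.
have dist_lt u v : u < v < u + h -> `|u - v| < h.
  by move=> /andP[uv vuh]; rewrite distrC gtr0_norm ?subr_gt0 //; lra.
have h_le1 : h <= d1 by rewrite ge_min lexx.
have h_le2 : h <= d2 by rewrite ge_min lexx orbT.
have [xi [eta [xi' [eta' [xiI etaI xiI' etaI' meet]]]]] := mixed_partials_meet x y h h_gt0.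
have c01 := close01 xi' eta' (lt_le_trans (dist_lt _ _ xiI') h_le1)
  (lt_le_trans (dist_lt _ _ etaI') h_le1).
have c10 := close10 xi eta (lt_le_trans (dist_lt _ _ xiI) h_le2)
  (lt_le_trans (dist_lt _ _ etaI) h_le2).
have triangle (p p' q q' : R) :
    `|p - p'| < e / 2 -> `|q - q'| < e / 2 -> p' = q' -> `|p - q| <= 0 + e.
  move=> pp' qp' p'q'; rewrite -p'q' in qp'; rewrite add0r [leRHS]splitr.
  apply: le_trans (ler_distD p' p q) _.
  by rewrite (distrC p' q); apply/ltW/ltrD.
exact: triangle c01 c10 meet.
Qed.
End Schwarz.

Lemma smooth_pd_swap (R : realType) (f : R -> R -> R) : smooth f ->
  forall x y, pd ord0 (pd ord_max f) x y = pd ord_max (pd ord0 f) x y.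
Proof.
move=> sf x y.
have fx a b : derivable (fun t => f t b) a 1 := ((sf [::]).1 a b).1.
have fy a b : derivable (fun t => f a t) b 1 := ((sf [::]).1 a b).2.
have f0y a b : derivable (fun t => pd ord0 f a t) b 1 := ((sf [:: ord0]).1 a b).2.
have f1x a b : derivable (fun t => pd ord_max f t b) a 1 := ((sf [:: ord_max]).1 a b).1.
exact: pd_swap R f fx fy f0y f1x x y ((sf [:: ord0; ord_max]).2 (x, y))
  ((sf [:: ord_max; ord0]).2 (x, y)).
Qed.

Section Divergence.
Variable R : realType.

Lemma divvE (w : R -> R -> 'cV[R]_2) x y :
  divv w x y = pd ord0 (fun a b => w a b ord0 ord0) x y
             + pd ord_max (fun a b => w a b ord_max ord0) x y.
Proof. by rewrite /divv sum_ord2. Qed.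

Lemma divvB (w1 w2 : R -> R -> 'cV[R]_2) x y :
  (forall i, pderivable (fun a b => w1 a b i ord0) x y) ->
  (forall i, pderivable (fun a b => w2 a b i ord0) x y) ->
  divv (fun a b => w1 a b - w2 a b) x y = divv w1 x y - divv w2 x y.
Proof.
move=> dw1 dw2; rewrite /divv -sumrB; apply: eq_bigr => i _.
rewrite -pdB // (@eq_pd R i _ (fun a b => w1 a b i ord0 - w2 a b i ord0)) //.
by move=> a b; rewrite !mxE.
Qed.

Lemma divME (V : R -> R -> 'M[R]_2) a b i : divM V a b i ord0 =
  pd ord0 (fun a b => V a b i ord0) a b + pd ord_max (fun a b => V a b i ord_max) a b.
Proof. by rewrite mxE sum_ord2. Qed.

Lemma pderivable_divM (V : R -> R -> 'M[R]_2) x y :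
  (forall i j, pderivable (pd j (fun a b => V a b i j)) x y) ->
  forall i, pderivable (fun a b => divM V a b i ord0) x y.
Proof.
move=> dV i.
have -> : (fun a b => divM V a b i ord0) = fun a b =>
    pd ord0 (fun a b => V a b i ord0) a b + pd ord_max (fun a b => V a b i ord_max) a b.
  by apply/funext => a; apply/funext => b; rewrite divME.
exact: pderivableD.
Qed.

Lemma divv_divM (V : R -> R -> 'M[R]_2) x y :
  (forall i j, pderivable (pd j (fun a b => V a b i j)) x y) ->
  divv (divM V) x y = divdiv V x y.
Proof.
move=> dV; rewrite /divv /divdiv; apply: eq_bigr => i _.
rewrite sum_ord2 -pdD // (@eq_pd R i _ (fun a b =>
  pd ord0 (fun a b => V a b i ord0) a b + pd ord_max (fun a b => V a b i ord_max) a b)) //.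
by move=> a b; rewrite divME.
Qed.

Lemma Amat_sqr : Amat R *m Amat R = - 1%:M.
Proof.
apply/matrixP => i j; rewrite !mxE sum_ord2 !mxE.
by case: i => [[|[|i]] ?] //; case: j => [[|[|j]] ?] //=; ring.
Qed.

Lemma Amat_grad0 th a b : (Amat R *m grad th a b) ord0 ord0 = - pd ord_max th a b.
Proof. by rewrite !mxE sum_ord2 !mxE /=; ring. Qed.

Lemma Amat_grad1 th a b : (Amat R *m grad th a b) ord_max ord0 = pd ord0 th a b.
Proof. by rewrite !mxE sum_ord2 !mxE /=; ring. Qed.

Lemma pderivable_Amat_grad th x y : (forall k, pderivable (pd k th) x y) ->
  forall i, pderivable (fun a b => (Amat R *m grad th a b) i ord0) x y.
Proof.
move=> dth; apply: ord2_ind.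
  have -> : (fun a b => (Amat R *m grad th a b) ord0 ord0) = fun a b => - pd ord_max th a b.
    by apply/funext => a; apply/funext => b; rewrite Amat_grad0.
  exact: pderivableN.
have -> : (fun a b => (Amat R *m grad th a b) ord_max ord0) = pd ord0 th.
  by apply/funext => a; apply/funext => b; rewrite Amat_grad1.
exact: dth.
Qed.

Lemma divv_Amat_grad th x y : smooth th ->
  divv (fun a b => Amat R *m grad th a b) x y = 0.
Proof.
move=> sth; rewrite divvE (eq_pd _ _ (Amat_grad0 th)) (eq_pd _ _ (Amat_grad1 th)).
rewrite pdN; last exact: ((sth [:: ord_max]).1 x y).
by rewrite smooth_pd_swap // addNr.
Qed.
End Divergence.

Theorem lemma2p1 (R : realType) (V : R -> R -> 'M[R]_2) (Q : R -> R -> 'M[R]_2)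
    (F : R -> R -> 'M[R]_2) (th : R -> R -> R) :
  smooth_mx V ->
  (forall x y, (V x y)^T = V x y) ->
  (forall x y, posdef (1%:M + V x y)) ->
  (forall x y, Q x y *m (Q x y)^T = 1%:M) ->
  (forall x y, F x y = (1%:M + V x y) *m Q x y) ->
  (forall x y, \det (F x y) = 1) ->
  smooth th ->
  (forall x y, divM V x y = Amat R *m (1%:M + V x y) *m grad th x y) ->
  forall x y,
    \tr (V x y) = - \det (V x y) /\
    divdiv V x y =
      - divv (fun a b => Amat R *m V a b *m invmx (1%:M + V a b) *m Amat R *m divM V a b) x y.
Proof.
move=> sV _ posW QQ FE detF sth divE x y.
have detW a b : \det (1%:M + V a b) = 1.
  by apply: det_posdef_polar_eq1 (posW a b) (QQ a b) _; rewrite -FE.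
split; first by have := det_add1_mx2 (V x y); rewrite detW; lra.
have dV i j : pderivable (pd j (fun a b => V a b i j)) x y := (sV i j [:: j]).1 x y.
have dth k : pderivable (pd k th) x y := (sth [:: k]).1 x y.
have -> : (fun a b => Amat R *m V a b *m invmx (1%:M + V a b) *m Amat R *m divM V a b)
    = (fun a b => Amat R *m grad th a b - divM V a b).
  apply/funext => a; apply/funext => b.
  by rewrite divE skew_resolvent_mulmx ?Amat_sqr // unitmxE detW unitr1.
rewrite divvB ?divv_Amat_grad ?divv_divM ?sub0r ?opprK //.
  exact: pderivable_Amat_grad.
exact: pderivable_divM.
Qed.
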